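(* Let $\Omega\subset\mathbb{R}^2$ be open, $\lambda>0$, and let $u\in L^2(\Omega)$ satisfy $-\Delta u=\lambda u$ in $\Omega$. Let $\mathbf{x}_0\in\Omega$, $h>0$, $\alpha\in(0,1)$, and let $\mathbf{e}^-,\mathbf{e}^+$ be unit vectors with angle $\alpha\pi$ from $\mathbf{e}^-$ to $\mathbf{e}^+$; put $\Gamma^\pm=\{\mathbf{x}_0+t\mathbf{e}^\pm:0\le t\le h\}\subset\Omega$. Suppose $\Gamma^+$ is a singular line of $u$ ($\partial_\nu u=0$ on $\Gamma^+$) and $\Gamma^-$ is a generalized singular line of $u$ with constant parameter $\eta_1\equiv C_1\neq0$. Let $n\in\mathbb{N}$, $n\ge3$. If $u(\mathbf{x}_0)=0$ and $\alpha\neq q/p$ for all integers $1\le q<p\le n-1$, then $u$ vanishes up to the order $n$ at $\mathbf{x}_0$, i.e. all partial derivatives of $u$ of order at most $n-1$ vanish at $\mathbf{x}_0$.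
   Context: No boundary condition is imposed on $\partial\Omega$; $u$ is real-analytic in $\Omega$. $\nu$ denotes a unit normal to the segment in question. A generalized singular line with parameter $\eta$ is a segment on which $\partial_\nu u+\eta u=0$. ''Vanishes up to order $n$'' means every homogeneous term of degree $<n$ in the Taylor expansion of $u$ at $\mathbf{x}_0$ vanishes. *)

From mathcomp Require Import all_boot all_order all_algebra.
From mathcomp Require Import all_classical all_reals all_analysis.
Import Order.TTheory GRing.Theory Num.Theory.
Import numFieldNormedType.Exports.
Set Implicit Arguments. Unset Strict Implicit. Unset Printing Implicit Defensive.

Local Open Scope ring_scope.

Section Defs.
Variable R : realType.

Definition dx (f : R * R -> R) : R * R -> R := fun p => 'D_((1:R), (0:R)) f p.
Definition dy (f : R * R -> R) : R * R -> R := fun p => 'D_((0:R), (1:R)) f p.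

Definition pdiff (u : R * R -> R) (i j : nat) : R * R -> R :=
  iter i dx (iter j dy u).

Definition smooth_on (Omega : set (R * R)) (u : R * R -> R) : Prop :=
  forall (i j : nat) (p : R * R), Omega p -> differentiable (pdiff u i j) p.

Definition L2_on (Omega : set (R * R)) (u : R * R -> R) : Prop :=
  ((@lebesgue_measure R) \x (@lebesgue_measure R))%E.-integrable Omega
     (fun p => ((u p) ^+ 2)%:E).

Definition ray_pt (x0 e : R * R) (t : R) : R * R :=
  (x0.1 + t * e.1, x0.2 + t * e.2).

Definition segment (x0 e : R * R) (h : R) : set (R * R) :=
  [set p | exists2 t, 0 <= t <= h & p = ray_pt x0 e t].

Definition normal (e : R * R) : R * R := (- e.2, e.1).

Definition rotate (theta : R) (e : R * R) : R * R :=
  (cos theta * e.1 - sin theta * e.2, sin theta * e.1 + cos theta * e.2).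

Definition unit_vec (e : R * R) : Prop := e.1 ^+ 2 + e.2 ^+ 2 = 1.

Definition singular_line (u : R * R -> R) (x0 e : R * R) (h : R) : Prop :=
  forall p, segment x0 e h p -> 'D_(normal e) u p = 0.

Definition gen_singular_line (u : R * R -> R) (eta : R * R -> R)
    (x0 e : R * R) (h : R) : Prop :=
  forall p, segment x0 e h p -> 'D_(normal e) u p + eta p * u p = 0.

Definition vanishes_up_to (u : R * R -> R) (x0 : R * R) (n : nat) : Prop :=
  forall i j : nat, (i + j < n)%N -> pdiff u i j x0 = 0.

End Defs.

From mathcomp Require Import all_boot all_order all_algebra.
From mathcomp Require Import all_classical all_reals all_analysis.
From mathcomp Require Import ring lra zify complex.
Import Order.TTheory GRing.Theory Num.Theory.
Import numFieldNormedType.Exports.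

Set Implicit Arguments.
Unset Strict Implicit.
Unset Printing Implicit Defensive.
Local Open Scope classical_set_scope.
Local Open Scope ring_scope.

(* Write [coef l] for the iterated directional derivative of [u] at [x0] along
   the vectors of [l], and argue by induction on the order [m], assuming all
   derivatives of order [< m] vanish. On lists of length [m], [coef] is then a
   symmetric m-linear form, trace free because its trace is [-lambda] times a
   derivative of order [m - 2]. In the frame [(e-, nu-)] such a form is
   determined by [coef (e-^m)] and [coef (e-^(m-1) nu-)]; the latter equals
   [-C1 coef (e-^(m-1)) = 0] on the generalized singular line, so
   [coef l = c Re (prod_i l_i conj(e-))] in complex notation. On the singular
   line [0 = coef (e+^(m-1) nu+) = - c sin (m alpha pi)], and [alpha <> q/m]
   forces [c = 0]. Derivatives at the endpoint [x0] of a segment are limits of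
   derivatives along its interior. *)

Section LocalDifferentiability.
Variables (R : realType) (V W : normedModType R).

Lemma near_eq_differentiable (f g : V -> W) (p : V) :
  (\near p, f p = g p) -> differentiable f p -> differentiable g p.
Proof.
move=> fg df.
have E : g \o shift p = cst (g p) + 'd f p +o_ 0 id.
  apply/eqaddoP => _/posnumP[e].
  have /eqaddoP /(_ e%:num) /(_ [gt0 of e%:num]) := diff_locally df.
  have fg0 : \forall h \near 0, f (h + p) = g (h + p).
    rewrite (near_shift p) /=; near=> h; rewrite /= sub0r addrNK; exact: (near fg h).
  apply: filter_app; near=> h => /=.
  by rewrite !fctE (near fg0 h) // (nbhs_singleton fg).
have dgf : 'd g p = 'd f p :> (V -> W).
  by apply: (@diff_unique _ _ _ g ('d f p) p _ E); exact: diff_continuous.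
by apply/diff_locallyP; rewrite dgf; split; [exact: diff_continuous|].
Unshelve. all: by end_near. Qed.

End LocalDifferentiability.

Section Schwarz.
Variables (R : realType) (V : normedModType R).
Implicit Types (F : V -> R) (p v w : V).

Lemma is_derive_line F p v t : differentiable F (p + t *: v) ->
  is_derive t 1 (fun s => F (p + s *: v)) ('D_v F (p + t *: v)).
Proof.
have quotE : (fun h : R => h^-1 *: ((fun s => F (p + s *: v)) (h *: 1 + t)
      - F (p + t *: v))) =
    (fun h : R => h^-1 *: (F (h *: v + (p + t *: v)) - F (p + t *: v))).
  by apply/funext => h; rewrite /= [h%:A]mulr1 scalerDl addrCA [_ + (p + _)]addrC.
move=> dF; split; first by rewrite /derivable quotE; exact: diff_derivable.
by rewrite /derive quotE.
Qed.

Lemma second_difference_mvt F p v w s : 0 < s ->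
  (forall t, 0 <= t <= s ->
     differentiable F (p + s *: w + t *: v) /\ differentiable F (p + t *: v)) ->
  exists2 c, 0 < c < s &
    F (p + s *: w + s *: v) - F (p + s *: v) - F (p + s *: w) + F p =
    s * ('D_v F (p + s *: w + c *: v) - 'D_v F (p + c *: v)).
Proof.
move=> s0 dF.
pose g t := F (p + s *: w + t *: v) - F (p + t *: v).
have g' t : 0 <= t <= s -> is_derive t 1 g
    ('D_v F (p + s *: w + t *: v) - 'D_v F (p + t *: v)).
  by move=> /dF[d1 d2]; apply: is_deriveB; exact: is_derive_line.
have [c] : exists2 c, c \in `]0, s[ & g s - g 0 =
    ('D_v F (p + s *: w + c *: v) - 'D_v F (p + c *: v)) * (s - 0).
  apply: MVT => // [t|].
    by rewrite in_itv => /andP[t0 ts]; apply: g'; rewrite !ltW.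
  by apply: derivable_within_continuous => t; rewrite in_itv /= => /g'[].
rewrite in_itv /g !scale0r !addr0 subr0 => cs E; exists c => //.
by rewrite mulrC -E; ring.
Qed.

Lemma second_difference_approx F p v w r : 0 < r ->
  (forall q, `|p - q| < r -> differentiable F q) ->
  differentiable ('D_v F) p ->
  forall e, 0 < e -> exists2 d, 0 < d & forall s, 0 < s < d ->
    `|F (p + s *: w + s *: v) - F (p + s *: v) - F (p + s *: w) + F p
      - s ^+ 2 * 'D_w ('D_v F) p| <= e * s ^+ 2.
Proof.
move=> r0 dF dG e e0.
set G := 'D_v F; set L := 'd G p; set N := `|v| + `|w| + 1.
have N0 : 0 < N by rewrite ltr_pwDr // addr_ge0.
set e' := e / (2 * N).
have e'0 : 0 < e' by rewrite divr_gt0 // mulr_gt0.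
have /eqaddoP /(_ e' e'0) /nbhs_normP [d1 d10 Hd1] := diff_locally dG.
exists (Num.min d1 r / N); first by rewrite divr_gt0 // lt_min d10.
move=> s /andP [s0]; rewrite ltr_pdivlMr // lt_min => /andP[sNd1 sNr].
have nrm1 t : 0 <= t <= s -> `|s *: w + t *: v| <= s * N.
  move=> /andP [t0 ts]; rewrite (le_trans (ler_normD _ _)) // !normrZ.
  rewrite (ger0_norm (ltW s0)) (ger0_norm t0) /N !mulrDr mulr1.
  have := ler_wpM2r (normr_ge0 v) ts; lra.
have nrm2 t : 0 <= t <= s -> `|t *: v| <= s * N.
  move=> /andP [t0 ts]; rewrite normrZ (ger0_norm t0) /N !mulrDr mulr1.
  have := ler_wpM2r (normr_ge0 v) ts; have := mulr_ge0 (ltW s0) (normr_ge0 w).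
  lra.
have [c cs ->] : exists2 c, 0 < c < s &
    F (p + s *: w + s *: v) - F (p + s *: v) - F (p + s *: w) + F p =
    s * (G (p + s *: w + c *: v) - G (p + c *: v)).
  apply: second_difference_mvt => // t ts; split; apply: dF.
    by rewrite -addrA opprD addNKr normrN (le_lt_trans (nrm1 t ts)).
  by rewrite opprD addNKr normrN (le_lt_trans (nrm2 t ts)).
have {}cs : 0 <= c <= s by case/andP: cs => c0 cs; rewrite !ltW.
have near_p h : `|h| <= s * N -> `|G (h + p) - (G p + L h)| <= e' * (s * N).
  move=> hN; have := Hd1 h; rewrite /ball_ /= sub0r normrN => /(_ (le_lt_trans hN sNd1)).
  by move/le_trans; apply; rewrite ler_wpM2l // ltW.
have -> : s * (G (p + s *: w + c *: v) - G (p + c *: v)) - s ^+ 2 * 'D_w G p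
    = s * ((G ((s *: w + c *: v) + p) - (G p + L (s *: w + c *: v)))
         - (G (c *: v + p) - (G p + L (c *: v)))).
  have LE : L (s *: w + c *: v) = s * L w + L (c *: v) by rewrite linearD linearZ.
  have E1 : p + s *: w + c *: v = s *: w + c *: v + p by rewrite [RHS]addrC addrA.
  by rewrite deriveE // -/L LE E1 [p + _]addrC; ring.
rewrite normrM (ger0_norm (ltW s0)) expr2 mulrA [e * s]mulrC -mulrA ler_pM2l //.
apply: (le_trans (ler_normB _ _)).
apply: (le_trans (lerD (near_p _ (nrm1 c cs)) (near_p _ (nrm2 c cs)))).
suff -> : e' * (s * N) + e' * (s * N) = e * s by [].
by rewrite /e'; field; rewrite gt_eqF.
Qed.

Lemma deriveC F p v w r : 0 < r ->
  (forall q, `|p - q| < r -> differentiable F q) ->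
  differentiable ('D_v F) p -> differentiable ('D_w F) p ->
  'D_w ('D_v F) p = 'D_v ('D_w F) p.
Proof.
move=> r0 dF dv dw; apply/eqP; rewrite -subr_eq0 -normr_le0.
apply/ler_addgt0Pr => e e0; rewrite add0r.
have e20 : 0 < e / 2 by rewrite divr_gt0.
have [d1 d10 H1] := second_difference_approx w r0 dF dv e20.
have [d2 d20 H2] := second_difference_approx v r0 dF dw e20.
pose s := Num.min d1 d2 / 2.
have m0 : 0 < Num.min d1 d2 by rewrite lt_min d10.
have s0 : 0 < s by rewrite divr_gt0.
have : s < Num.min d1 d2 by rewrite /s; lra.
rewrite lt_min => /andP[sd1 sd2].
have {H1} := H1 s; have {H2} := H2 s; rewrite s0 sd1 sd2 => /(_ isT) H2 /(_ isT) H1.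
rewrite [p + s *: v + s *: w]addrAC [F _ - F (p + s *: w) - _]addrAC in H2.
move: H1 H2; set D2 := F (p + s *: w + s *: v) - F (p + s *: v) - F (p + s *: w) + F p.
set a := 'D_w ('D_v F) p; set b := 'D_v ('D_w F) p => H1 H2.
have : `|s ^+ 2 * (a - b)| <= e * s ^+ 2.
  have -> : s ^+ 2 * (a - b) = (D2 - s ^+ 2 * b) - (D2 - s ^+ 2 * a) by ring.
  have -> : e * s ^+ 2 = e / 2 * s ^+ 2 + e / 2 * s ^+ 2 by field.
  exact: le_trans (ler_normB _ _) (lerD H2 H1).
by rewrite normrM ger0_norm ?sqr_ge0 // mulrC ler_pM2r // exprn_gt0.
Qed.
End Schwarz.

Section Trigonometry.
Variable R : realType.

Lemma sinD_mulnpi (z : R) (k : nat) : sin (z + k%:R * pi) = (-1) ^+ k * sin z.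
Proof.
elim: k => [|k IH]; first by rewrite mul0r addr0 expr0 mul1r.
by rewrite mulrS mulrDl mul1r addrCA addrC sinDpi IH exprS mulN1r mulNr.
Qed.

Lemma sin_mulnpi_neq0 (a : R) (m : nat) : 0 < a < 1 -> (0 < m)%N ->
  (forall q : nat, (1 <= q < m)%N -> a != q%:R / m%:R) ->
  sin (m%:R * (a * pi)) != 0.
Proof.
move=> /andP [a0 a1] m0 a_neq.
have m0' : 0 < m%:R :> R by rewrite ltr0n.
pose x := m%:R * a; pose k := Num.truncn x.
have x0 : 0 < x by rewrite mulr_gt0.
have /andP[kx xk] := truncn_itv (ltW x0); rewrite -/k in kx xk.
have [xk_eq|xk_neq] := eqVneq x k%:R.
  have k_range : (1 <= k < m)%N.
    by rewrite -(ltr_nat R) -(ltr_nat R) -xk_eq x0 /x -[X in _ < X]mulr1 ltr_pM2l.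
  by move: (a_neq k k_range); rewrite -xk_eq /x mulrAC divff ?mul1r ?eqxx // gt_eqF.
have -> : m%:R * (a * pi) = (x - k%:R) * pi + k%:R * pi by rewrite /x; ring.
have y0 : 0 < x - k%:R by rewrite subr_gt0 lt_neqAle eq_sym xk_neq kx.
have y1 : x - k%:R < 1 by move: xk; rewrite -natr1; lra.
rewrite sinD_mulnpi mulf_neq0 ?signr_eq0 // gt_eqF // sin_gt0_pi //.
by rewrite mulr_gt0 ?pi_gt0 //= -[X in _ < X]mul1r ltr_pM2r ?pi_gt0.
Qed.

End Trigonometry.

Section SymmetricForms.
Variables (R : pzRingType) (V : lmodType R) (Phi : seq V -> R).
Hypothesis Phi_lin : forall l1 l2 (a b : R) v w,
  Phi (l1 ++ (a *: v + b *: w) :: l2) =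
  a * Phi (l1 ++ v :: l2) + b * Phi (l1 ++ w :: l2).
Hypothesis Phi_swap : forall l1 l2 v w,
  Phi (l1 ++ v :: w :: l2) = Phi (l1 ++ w :: v :: l2).

Lemma form_shift l0 v l1 l2 : Phi (l0 ++ v :: l1 ++ l2) = Phi (l0 ++ l1 ++ v :: l2).
Proof. by elim: l1 l0 => [|x l1 IH] l0 //=; rewrite Phi_swap -cat_rcons IH cat_rcons. Qed.

(* With [f] completing [e] to a basis, a symmetric form is determined by its
   values on [e^a f^b]; the trace relation lowers [b] by two. *)
Lemma sym_form_eq0 (e f : V) (m : nat) :
  (forall v, exists a b, v = a *: e + b *: f) ->
  (forall l, (size l + 2 = m)%N -> Phi (l ++ [:: e; e]) + Phi (l ++ [:: f; f]) = 0) ->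
  Phi (nseq m e) = 0 ->
  ((0 < m)%N -> Phi (nseq m.-1 e ++ [:: f]) = 0) ->
  forall l, size l = m -> Phi l = 0.
Proof.
move=> basis trace0 Pe Pef.
have nseqS a (x : V) X : nseq a x ++ x :: X = nseq a.+1 x ++ X.
  by elim: a => //= a ->.
have monomial0 b a : (a + b = m)%N -> Phi (nseq a e ++ nseq b f) = 0.
  elim/ltn_ind: b a => -[|[|c]] IH a abm.
  - by rewrite addn0 in abm; rewrite cats0 abm.
  - by move: Pef; rewrite -abm addn1; apply.
  have := trace0 (nseq a e ++ nseq c f).
  rewrite size_cat !size_nseq -abm -addnA addn2 => /(_ erefl).
  have -> : nseq c.+2 f = nseq c f ++ [:: f; f] by rewrite -addn2 nseqD.
  rewrite -!catA -(form_shift _ e (nseq c f) [:: e]) nseqS.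
  rewrite -(form_shift _ e (nseq c f) [::]) cats0 nseqS IH ?add0r //.
  by rewrite -abm !addnS addSn.
have gen l a b : (size l + a + b = m)%N -> Phi (l ++ nseq a e ++ nseq b f) = 0.
  elim: l a b => [|v l IH] a b lab; first exact: monomial0.
  have [al [be ->]] := basis v.
  rewrite -cat1s -catA (Phi_lin [::]) /=.
  have -> : Phi (e :: l ++ nseq a e ++ nseq b f) = Phi (l ++ nseq a.+1 e ++ nseq b f).
    exact: (form_shift [::] e l).
  have -> : Phi (f :: l ++ nseq a e ++ nseq b f) = Phi (l ++ nseq a e ++ nseq b.+1 f).
    by rewrite catA (form_shift [::] f) -catA.
  rewrite !IH ?mulr0 ?addr0 //.
    by rewrite -lab /= addnS addSn.
  by rewrite -lab /= addSn addnS.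
by move=> l lm; rewrite -[l]cats0 -[l ++ _]cats0 -catA (gen l 0 0) // !addn0.
Qed.

End SymmetricForms.

(* Identifying [R * R] with [R[i]], [re_monomial e] on lists of length [m] is
   the polar form of the harmonic polynomial [z |-> Re ((z * e^* )^m)]. *)
Definition cplx {R : realType} (v : R * R) : R[i] := (v.1 +i* v.2)%C.

Definition re_monomial {R : realType} (e : R * R) (l : seq (R * R)) : R :=
  complex.Re (\prod_(v <- l) (cplx v * (cplx e)^*))%C.

Section ComplexCoordinates.
Variable R : realType.
Local Open Scope complex_scope.
Implicit Types (a b : R) (v w : R * R) (z y : R[i]).

Lemma Re_comb a b z y : complex.Re (a%:C * z + b%:C * y) = a * complex.Re z + b * complex.Re y.
Proof. by case: z y => [z1 z2] [y1 y2]; simpc. Qed.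

Lemma ReD z y : complex.Re z + complex.Re y = complex.Re (z + y).
Proof. by case: z y => [z1 z2] [y1 y2]. Qed.

Lemma cplx_comb a b v w : cplx (a *: v + b *: w) = a%:C * cplx v + b%:C * cplx w.
Proof. by rewrite /cplx; simpc. Qed.

Lemma prod_nseq (x : R * R) (F : R * R -> R[i]) k :
  \prod_(v <- nseq k x) F v = F x ^+ k.
Proof. by elim: k => [|k IH]; rewrite ?big_nil ?big_cons ?IH ?exprS. Qed.

Lemma cplx_normal v : cplx (normal v) = 'i * cplx v.
Proof. by rewrite /cplx /=; simpc. Qed.

Variable e : R * R.
Hypothesis ue : unit_vec e.

Lemma cplx_unit : cplx e * (cplx e)^* = 1.
Proof. by rewrite /cplx; simpc; rewrite -!expr2 ue [e.2 * _]mulrC addNr. Qed.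

Lemma cplx_normal_unit : cplx (normal e) * (cplx e)^* = 'i.
Proof. by rewrite cplx_normal -mulrA cplx_unit mulr1. Qed.

Lemma cplx_rotate_unit th : cplx (rotate th e) * (cplx e)^* = cos th +i* sin th.
Proof.
by rewrite /cplx /rotate /=; simpc; congr (_ +i* _); rewrite -[RHS]mulr1 -ue; ring.
Qed.

Lemma re_monomial_lin l1 l2 a b v w :
  re_monomial e (l1 ++ (a *: v + b *: w) :: l2) =
  a * re_monomial e (l1 ++ v :: l2) + b * re_monomial e (l1 ++ w :: l2).
Proof.
by rewrite /re_monomial !big_cat !big_cons cplx_comb -Re_comb /=; congr complex.Re; ring.
Qed.

Lemma re_monomial_swap l1 l2 v w :
  re_monomial e (l1 ++ v :: w :: l2) = re_monomial e (l1 ++ w :: v :: l2).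
Proof.
by rewrite /re_monomial !big_cat !big_cons /=; congr (complex.Re (_ * _)); exact: mulrCA.
Qed.

Lemma re_monomial_nseq k : re_monomial e (nseq k e) = 1.
Proof. by rewrite /re_monomial prod_nseq cplx_unit expr1n. Qed.

Lemma re_monomial_normal k : re_monomial e (nseq k e ++ [:: normal e]) = 0.
Proof.
rewrite /re_monomial big_cat prod_nseq cplx_unit expr1n big_seq1 cplx_normal_unit /=.
by rewrite mul1r mul0r subr0.
Qed.

Lemma re_monomial_trace l :
  re_monomial e (l ++ [:: e; e]) + re_monomial e (l ++ [:: normal e; normal e]) = 0.
Proof.
have ii : 'i * 'i = -1 :> R[i] by simpc.
rewrite /re_monomial !big_cat !big_cons big_nil /= cplx_unit cplx_normal_unit.
by rewrite ReD !mulr1 ii mulrN1 subrr.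
Qed.

Lemma re_monomial_rotate th k :
  re_monomial e (nseq k (rotate th e) ++ [:: normal (rotate th e)]) = - sin (k.+1%:R * th).
Proof.
have de_moivre j : (cos th +i* sin th) ^+ j = cos (j%:R * th) +i* sin (j%:R * th).
  elim: j => [|j IH]; first by rewrite mul0r cos0 sin0.
  by rewrite exprS IH mulrS mulrDl mul1r cosD sinD; simpc; congr (_ +i* _); ring.
rewrite /re_monomial big_cat prod_nseq big_seq1 cplx_normal -mulrA.
by rewrite cplx_rotate_unit /= mulrCA -exprSr de_moivre; simpc.
Qed.

Lemma unit_frame_decomp v : exists a b : R, v = a *: e + b *: normal e.
Proof.
exists (v.1 * e.1 + v.2 * e.2), (v.2 * e.1 - v.1 * e.2).
apply: injective_projections; rewrite /= /GRing.scale /=.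
  by rewrite -[LHS]mulr1 -ue; ring.
by rewrite -[LHS]mulr1 -ue; ring.
Qed.

End ComplexCoordinates.

Definition e_x {R : realType} : R * R := (1, 0).
Definition e_y {R : realType} : R * R := (0, 1).

Lemma pair_decomp {R : realType} (v : R * R) : v = v.1 *: e_x + v.2 *: e_y.
Proof. by apply: injective_projections; rewrite /= /GRing.scale /=; ring. Qed.

Section PlaneForms.
Variables (R : realType) (Phi : seq (R * R) -> R).
Hypothesis Phi_lin : forall l1 l2 (a b : R) v w,
  Phi (l1 ++ (a *: v + b *: w) :: l2) =
  a * Phi (l1 ++ v :: l2) + b * Phi (l1 ++ w :: l2).
Hypothesis Phi_swap : forall l1 l2 v w,
  Phi (l1 ++ v :: w :: l2) = Phi (l1 ++ w :: v :: l2).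

Lemma form_trace_rotate l e : unit_vec e ->
  Phi (l ++ [:: e; e]) + Phi (l ++ [:: normal e; normal e]) =
  Phi (l ++ [:: e_x; e_x]) + Phi (l ++ [:: e_y; e_y]).
Proof.
move=> ue.
have expand v w : Phi (l ++ [:: v; w]) =
    v.1 * (w.1 * Phi (l ++ [:: e_x; e_x]) + w.2 * Phi (l ++ [:: e_x; e_y])) +
    v.2 * (w.1 * Phi (l ++ [:: e_y; e_x]) + w.2 * Phi (l ++ [:: e_y; e_y])).
  have last_slot z : Phi (l ++ [:: z; w]) =
      w.1 * Phi (l ++ [:: z; e_x]) + w.2 * Phi (l ++ [:: z; e_y]).
    have lz x : l ++ [:: z; x] = (l ++ [:: z]) ++ [:: x] by rewrite -catA.
    by rewrite !lz {1}(pair_decomp w) Phi_lin.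
  by rewrite {1}(pair_decomp v) Phi_lin !last_slot.
rewrite (expand e e) (expand (normal e) (normal e)) (Phi_swap l [::] e_y e_x) /=.
by rewrite -[RHS]mul1r -ue; ring.
Qed.

Lemma sym_traceless_form_eq e m : unit_vec e ->
  (forall l, (size l + 2 = m.+1)%N ->
     Phi (l ++ [:: e; e]) + Phi (l ++ [:: normal e; normal e]) = 0) ->
  Phi (nseq m e ++ [:: normal e]) = 0 ->
  forall l, size l = m.+1 -> Phi l = Phi (nseq m.+1 e) * re_monomial e l.
Proof.
move=> ue trace0 Pef l sl; apply/eqP; rewrite -subr_eq0; apply/eqP; move: l sl.
set c := Phi (nseq m.+1 e).
apply: (@sym_form_eq0 _ _ (fun l => Phi l - c * re_monomial e l) _ _ e (normal e)) => /=.
- by move=> *; rewrite Phi_lin re_monomial_lin; ring.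
- by move=> *; rewrite Phi_swap re_monomial_swap.
- exact: unit_frame_decomp.
- move=> l sl; rewrite addrACA trace0 // -opprD -mulrDr.
  by rewrite (@re_monomial_trace _ _ ue) mulr0 subr0.
- by rewrite (@re_monomial_nseq _ _ ue m.+1) mulr1 subrr.
- by rewrite Pef (@re_monomial_normal _ _ ue) mulr0 subr0.
Qed.

End PlaneForms.

Definition derive_seq {R : realType} (l : seq (R * R)) (F : R * R -> R) : R * R -> R :=
  foldr (fun v G => 'D_v G) F l.

Lemma derive_seq_cat {R : realType} (l1 l2 : seq (R * R)) F :
  derive_seq (l1 ++ l2) F = derive_seq l1 (derive_seq l2 F).
Proof. exact: foldr_cat. Qed.

Lemma derive_seq_nseq {R : realType} k (v : R * R) F :
  derive_seq (nseq k v) F = iter k (fun G => 'D_v G) F.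
Proof. by elim: k => //= k ->. Qed.

Lemma pdiff_derive_seq {R : realType} (F : R * R -> R) i j :
  pdiff F i j = derive_seq (nseq i e_x ++ nseq j e_y) F.
Proof. by rewrite derive_seq_cat !derive_seq_nseq. Qed.

Lemma derive_comb_dir {R : realType} (F : R * R -> R) p (a b : R) (v w : R * R) :
  differentiable F p -> 'D_(a *: v + b *: w) F p = a * 'D_v F p + b * 'D_w F p.
Proof. by move=> dF; rewrite !deriveE // linearD !linearZ. Qed.

Lemma derive_comb {R : realType} (F G : R * R -> R) (a b : R) v p :
  differentiable F p -> differentiable G p ->
  'D_v (a *: F + b *: G) p = a * 'D_v F p + b * 'D_v G p.
Proof.
move=> /diff_derivable dF /diff_derivable dG.
by rewrite deriveD ?deriveZ //; apply: derivableZ.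
Qed.

Lemma fun_combE (T : Type) (K : pzRingType) (V : lmodType K) (a b : K) (f g : T -> V) x :
  (a *: f + b *: g) x = a *: f x + b *: g x.
Proof. by []. Qed.

Section SmoothFunctions.
Variables (R : realType) (Omega : set (R * R)).
Hypothesis Omega_open : open Omega.
Implicit Types (F G : R * R -> R) (p : R * R).

Lemma Omega_near {p} : Omega p -> \forall q \near p, Omega q.
Proof. by move=> Op; apply: open_nbhs_nbhs. Qed.

Lemma eq_in_derive {F G} v : {in Omega, F =1 G} -> {in Omega, 'D_v F =1 'D_v G}.
Proof.
move=> FG p; rewrite inE => Op; apply: near_eq_derive.
by move: (Omega_near Op); apply: filterS => q Oq; apply: FG; rewrite inE.
Qed.

Lemma eq_in_differentiable {F G p} : {in Omega, F =1 G} -> Omega p ->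
  differentiable F p -> differentiable G p.
Proof.
move=> FG Op; apply: near_eq_differentiable.
by move: (Omega_near Op); apply: filterS => q Oq; apply: FG; rewrite inE.
Qed.

Lemma eq_in_derive_seq l {F G} : {in Omega, F =1 G} ->
  {in Omega, derive_seq l F =1 derive_seq l G}.
Proof. by move=> FG; elim: l => //= v l IH; exact: eq_in_derive. Qed.

Lemma smooth_on_eq_in {F G} : {in Omega, F =1 G} -> smooth_on Omega F -> smooth_on Omega G.
Proof.
move=> FG sF i j p Op; have := sF i j p Op; rewrite !pdiff_derive_seq.
exact: eq_in_differentiable (eq_in_derive_seq _ FG) Op.
Qed.

Lemma smooth_on_differentiable {F p} : smooth_on Omega F -> Omega p -> differentiable F p.
Proof. by move=> sF; exact: (sF 0%N 0%N). Qed.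

Lemma smooth_on_dy {F} : smooth_on Omega F -> smooth_on Omega (dy F).
Proof. by move=> sF i j; rewrite /pdiff -iterSr; exact: sF. Qed.

Lemma deriveC_on F v w p : (forall q, Omega q -> differentiable F q) -> Omega p ->
  differentiable ('D_v F) p -> differentiable ('D_w F) p ->
  'D_w ('D_v F) p = 'D_v ('D_w F) p.
Proof.
move=> dF /Omega_near /nbhs_normP[r /= r0 Br].
apply: (deriveC r0) => // q pq.
exact: dF (Br _ pq).
Qed.

Lemma smooth_on_dx {F} : smooth_on Omega F -> smooth_on Omega (dx F).
Proof.
move=> sF.
have dx_dy j : {in Omega, iter j (@dy R) (dx F) =1 dx (iter j (@dy R) F)}.
  elim: j => [//|j IH] p Op /=.
  rewrite -[LHS]/('D_e_y (iter j (@dy R) (dx F)) p).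
  rewrite (eq_in_derive _ IH Op); rewrite inE in Op.
  apply: (@deriveC_on (iter j (@dy R) F) e_x e_y p) => //.
  - by move=> q Oq; exact: (sF 0 j).
  - exact: (sF 1 j).
  - exact: (sF 0 j.+1).
move=> i j p Op; have := sF i.+1 j p Op; rewrite /pdiff iterSr.
apply: eq_in_differentiable Op.
elim: i => [|i IH] q Oq /=; first by rewrite dx_dy.
exact: (eq_in_derive _ IH Oq).
Qed.

Lemma pdiff_comb F G (a b : R) i j : smooth_on Omega F -> smooth_on Omega G ->
  {in Omega, pdiff (a *: F + b *: G) i j =1 a *: pdiff F i j + b *: pdiff G i j}.
Proof.
move=> sF sG; elim: i => [|i IH] p Op /=.
  elim: j p Op => [//|j IH] p Op /=.
  rewrite -[LHS]/('D_e_y (iter j (@dy R) (a *: F + b *: G)) p) (eq_in_derive _ IH Op).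
  by rewrite inE in Op; exact: derive_comb (sF 0%N j p Op) (sG 0%N j p Op).
rewrite -[LHS]/('D_e_x (pdiff (a *: F + b *: G) i j) p) (eq_in_derive _ IH Op).
by rewrite inE in Op; exact: derive_comb (sF i j p Op) (sG i j p Op).
Qed.

Lemma smooth_on_comb {F G} (a b : R) : smooth_on Omega F -> smooth_on Omega G ->
  smooth_on Omega (a *: F + b *: G).
Proof.
move=> sF sG i j p Op; apply: (eq_in_differentiable _ Op).
  by move=> q Oq; rewrite pdiff_comb.
by apply: differentiableD; apply: differentiableZ; [exact: sF|exact: sG].
Qed.

Lemma smooth_on_derive v {F} : smooth_on Omega F -> smooth_on Omega ('D_v F).
Proof.
move=> sF; apply: (smooth_on_eq_in (F := v.1 *: dx F + v.2 *: dy F)).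
  move=> p; rewrite inE => Op; rewrite [in RHS](pair_decomp v) derive_comb_dir //.
  exact: smooth_on_differentiable sF Op.
exact: smooth_on_comb (smooth_on_dx sF) (smooth_on_dy sF).
Qed.

Lemma smooth_on_derive_seq l {F} : smooth_on Omega F -> smooth_on Omega (derive_seq l F).
Proof. by move=> sF; elim: l => //= v l; exact: smooth_on_derive. Qed.

Lemma derive_seq_comb l (a b : R) {F G} : smooth_on Omega F -> smooth_on Omega G ->
  {in Omega, derive_seq l (a *: F + b *: G) =1
             a *: derive_seq l F + b *: derive_seq l G}.
Proof.
move=> sF sG; elim: l => [//|v l IH] p Op /=.
rewrite (eq_in_derive _ IH Op); rewrite inE in Op.
by apply: derive_comb; apply: smooth_on_differentiable Op; exact: smooth_on_derive_seq.
Qed.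

Lemma derive_seq_swap l1 l2 v w F : smooth_on Omega F ->
  {in Omega, derive_seq (l1 ++ v :: w :: l2) F =1 derive_seq (l1 ++ w :: v :: l2) F}.
Proof.
move=> sF; rewrite !derive_seq_cat; apply: eq_in_derive_seq => p; rewrite inE => Op /=.
have sG := smooth_on_derive_seq l2 sF.
apply: deriveC_on => //; last 2 first.
- exact: smooth_on_differentiable (smooth_on_derive _ sG) Op.
- exact: smooth_on_differentiable (smooth_on_derive _ sG) Op.
by move=> q; exact: smooth_on_differentiable sG.
Qed.

Lemma derive_seq_lin l1 l2 (a b : R) v w F p : smooth_on Omega F -> Omega p ->
  derive_seq (l1 ++ (a *: v + b *: w) :: l2) F p =
  a * derive_seq (l1 ++ v :: l2) F p + b * derive_seq (l1 ++ w :: l2) F p.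
Proof.
move=> sF Op; rewrite !derive_seq_cat /=.
have sG := smooth_on_derive_seq l2 sF.
have dir : {in Omega, 'D_(a *: v + b *: w) (derive_seq l2 F) =1
    a *: 'D_v (derive_seq l2 F) + b *: 'D_w (derive_seq l2 F)}.
  by move=> q; rewrite inE => Oq; apply: derive_comb_dir; exact: smooth_on_differentiable sG Oq.
have Op' : p \in Omega by rewrite inE.
rewrite (eq_in_derive_seq l1 dir Op').
by rewrite (derive_seq_comb l1 a b (smooth_on_derive v sG) (smooth_on_derive w sG)).
Qed.

(* Inside the segment the derivatives along [v] vanish with [G]; at the
   endpoint [x0] use continuity from the right. *)
Lemma derive_seq_nseq_eq0_on_segment G x0 v h : smooth_on Omega G -> 0 < h ->
  segment x0 v h `<=` Omega -> (forall p, segment x0 v h p -> G p = 0) ->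
  forall k, derive_seq (nseq k v) G x0 = 0.
Proof.
move=> sG h0 segO G0 k.
have seg t : 0 <= t <= h -> segment x0 v h (x0 + t *: v) by exists t.
have open_seg t : 0 < t < h -> segment x0 v h (x0 + t *: v).
  by case/andP=> t0 th; apply: seg; rewrite !ltW.
have dG j p : segment x0 v h p -> differentiable (derive_seq (nseq j v) G) p.
  by move=> /segO; exact: smooth_on_differentiable (smooth_on_derive_seq _ sG).
have inner t : 0 < t < h -> derive_seq (nseq k v) G (x0 + t *: v) = 0.
  elim: k t => [|j IH] t th; first exact/G0/open_seg.
  rewrite /=; have [_ <-] := is_derive_line (dG j _ (open_seg t th)).
  rewrite (@near_eq_derive _ _ _ _ (cst 0)) ?derive_cst //.
  have tin : t \in `]0, h[ by rewrite in_itv.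
  by apply: filterS (near_in_itvoo tin) => s; rewrite in_itv /=; exact: IH.
pose psi s := derive_seq (nseq k v) G (x0 + s *: v).
have seg0 : segment x0 v h (x0 + 0 *: v) by apply: seg; rewrite lexx ltW.
have [dpsi _] := is_derive_line (dG k _ seg0).
have psi_right : psi @ 0^'+ --> psi 0.
  by apply: cvg_at_right_filter; apply: differentiable_continuous; exact/derivable1_diffP.
have psi_right0 : psi @ 0^'+ --> (0 : R).
  apply: cvg_near_cst; near=> s; apply: inner; apply/andP; split; near: s.
    exact: nbhs_right_gt.
  exact: nbhs_right_lt.
by rewrite -[x0]addr0 -(scale0r v); exact: cvg_unique psi_right psi_right0.
Unshelve. all: by end_near. Qed.
End SmoothFunctions.


Section CornerCoefficients.
Variables (R : realType) (Omega : set (R * R)) (lambda C1 h theta : R).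
Variables (u : R * R -> R) (x0 em ep : R * R).
Hypotheses (Omega_open : open Omega) (u_smooth : smooth_on Omega u).
Hypothesis helmholtz :
  forall p, Omega p -> - (pdiff u 2 0 p + pdiff u 0 2 p) = lambda * u p.
Hypotheses (h_gt0 : 0 < h) (em_unit : unit_vec em) (ep_rot : ep = rotate theta em).
Hypotheses (ep_sub : segment x0 ep h `<=` Omega) (em_sub : segment x0 em h `<=` Omega).
Hypotheses (ep_singular : singular_line u x0 ep h)
  (em_singular : gen_singular_line u (fun _ => C1) x0 em h).

Let coef l := derive_seq l u x0.

Let x0_in : Omega x0.
Proof.
apply: em_sub; exists 0; first by rewrite lexx ltW.
by case: x0 => a b; rewrite /ray_pt /= !mul0r !addr0.
Qed.

Let coef_lin l1 l2 (a b : R) v w :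
  coef (l1 ++ (a *: v + b *: w) :: l2) = a * coef (l1 ++ v :: l2) + b * coef (l1 ++ w :: l2).
Proof. exact (derive_seq_lin Omega_open l1 l2 a b v w u_smooth x0_in). Qed.

Let coef_swap l1 l2 v w : coef (l1 ++ v :: w :: l2) = coef (l1 ++ w :: v :: l2).
Proof. exact (derive_seq_swap Omega_open l1 l2 v w u_smooth (mem_set x0_in)). Qed.

Lemma coef_trace l : coef (l ++ [:: e_x; e_x]) + coef (l ++ [:: e_y; e_y]) = - lambda * coef l.
Proof.
have comb a b F G : smooth_on Omega F -> smooth_on Omega G ->
    derive_seq l (a *: F + b *: G) x0 = a * derive_seq l F x0 + b * derive_seq l G x0.
  by move=> sF sG; exact (derive_seq_comb Omega_open l a b sF sG (mem_set x0_in)).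
have helm p : Omega p ->
    derive_seq [:: e_x; e_x] u p + derive_seq [:: e_y; e_y] u p = - lambda * u p.
  move=> /helmholtz; rewrite !pdiff_derive_seq mulNr => <-.
  by rewrite -[nseq 2 _ ++ _]/[:: e_x; e_x] -[nseq 0 _ ++ _]/[:: e_y; e_y] opprK.
have sA := smooth_on_derive_seq Omega_open [:: e_x; e_x] u_smooth.
have sB := smooth_on_derive_seq Omega_open [:: e_y; e_y] u_smooth.
rewrite /coef !derive_seq_cat.
move: (derive_seq [:: e_x; e_x] u) (derive_seq [:: e_y; e_y] u) sA sB helm.
move=> A B sA sB helm.
have helm_in : {in Omega, 1 *: A + 1 *: B =1 (- lambda) *: u + 0 *: u}.
  move=> p; rewrite inE => Op.
  by rewrite !fun_combE !scale1r scale0r addr0 helm.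
have := comb 1 1 _ _ sA sB.
rewrite (eq_in_derive_seq Omega_open l helm_in (mem_set x0_in)) comb //.
by rewrite !mul1r mul0r addr0 => <-.
Qed.

Lemma coef_gen_singular m : coef (nseq m em ++ [:: normal em]) = - C1 * coef (nseq m em).
Proof.
have sN := smooth_on_derive Omega_open (normal em) u_smooth.
have sG := smooth_on_comb Omega_open 1 C1 sN u_smooth.
have G0 : forall p, segment x0 em h p -> (1 *: 'D_(normal em) u + C1 *: u) p = 0.
  by move=> p /em_singular; rewrite fun_combE scale1r.
have := derive_seq_comb Omega_open (nseq m em) 1 C1 sN u_smooth (mem_set x0_in).
rewrite (derive_seq_nseq_eq0_on_segment Omega_open sG h_gt0 em_sub G0) fun_combE scale1r.
by rewrite /coef derive_seq_cat => /esym /eqP; rewrite addr_eq0 mulNr => /eqP.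
Qed.

Lemma coef_singular m : coef (nseq m ep ++ [:: normal ep]) = 0.
Proof.
rewrite /coef derive_seq_cat.
exact (derive_seq_nseq_eq0_on_segment Omega_open (smooth_on_derive Omega_open _ u_smooth)
  h_gt0 ep_sub ep_singular m).
Qed.

Lemma coef_vanish_step m : sin (m.+1%:R * theta) != 0 ->
  (forall l, (size l <= m)%N -> coef l = 0) -> forall l, size l = m.+1 -> coef l = 0.
Proof.
move=> sin_neq0 low.
have trace l : (size l + 2 = m.+1)%N ->
    coef (l ++ [:: em; em]) + coef (l ++ [:: normal em; normal em]) = 0.
  move=> sl; rewrite (form_trace_rotate coef_lin coef_swap l em_unit) coef_trace.
  by rewrite low ?mulr0 //; lia.
have ef : coef (nseq m em ++ [:: normal em]) = 0.
  by rewrite coef_gen_singular low ?size_nseq // mulr0.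
have harm := sym_traceless_form_eq coef_lin coef_swap em_unit trace ef.
have c0 : coef (nseq m.+1 em) = 0.
  have := harm (nseq m ep ++ [:: normal ep]).
  rewrite size_cat size_nseq addn1 coef_singular ep_rot (re_monomial_rotate em_unit).
  move=> /(_ erefl) /esym /eqP; rewrite mulf_eq0 oppr_eq0 (negPf sin_neq0) orbF.
  by move/eqP.
by move=> l sl; rewrite harm // c0 mul0r.
Qed.

End CornerCoefficients.

Theorem theorem3p6 (R : realType) (Omega : set (R * R)) (lambda : R)
  (u : R * R -> R) (x0 em ep : R * R) (h alpha C1 : R) (n : nat) :
  open Omega ->
  0 < lambda ->
  smooth_on Omega u ->
  L2_on Omega u ->
  (forall p, Omega p -> - (pdiff u 2 0 p + pdiff u 0 2 p) = lambda * u p) ->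
  Omega x0 ->
  0 < h ->
  0 < alpha < 1 ->
  unit_vec em ->
  ep = rotate (alpha * pi) em ->
  segment x0 ep h `<=` Omega ->
  segment x0 em h `<=` Omega ->
  singular_line u x0 ep h ->
  C1 != 0 ->
  gen_singular_line u (fun _ => C1) x0 em h ->
  (3 <= n)%N ->
  u x0 = 0 ->
  (forall p q : nat, (1 <= q)%N -> (q < p)%N -> (p <= n.-1)%N ->
     alpha != q%:R / p%:R) ->
  vanishes_up_to u x0 n.
Proof.
(* [Omega x0]
   follows from the segment inclusions. *)
move=> Omega_open _ u_smooth _ helmholtz _ h_gt0 alpha01 em_unit ep_rot ep_sub em_sub
  ep_singular _ em_singular n_ge3 u_x0 alpha_irr i j ijn.
have step := coef_vanish_step Omega_open u_smooth helmholtz h_gt0 em_unit ep_rot ep_sub em_sub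
  ep_singular em_singular.
have low m : (m < n)%N -> forall l, (size l <= m)%N -> derive_seq l u x0 = 0.
  elim: m => [_ l|m IH mn l]; first by rewrite leqn0 size_eq0 => /eqP ->.
  rewrite leq_eqVlt ltnS => /orP[/eqP|]; last by apply: IH; exact: ltnW.
  apply: step => [|l' /IH]; last by apply; exact: ltnW.
  apply: sin_mulnpi_neq0 => // q /andP[q1 qm]; apply: alpha_irr => //; lia.
by rewrite pdiff_derive_seq (low (i + j)%N) // size_cat !size_nseq.
Qed.
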